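(* In the Quantum variation of single-heap Nim under Ruleset A, Ruleset B or Ruleset D, the value of a superposition $\langle \mathrm{Nim}(i_1),\ldots,\mathrm{Nim}(i_\ell)\rangle$ of single Nim heaps depends only on $\max_j i_j$; i.e. two such superpositions with the same largest heap size are equivalent.
   Context: Nim: $\mathrm{Nim}(x_1,\ldots,x_k)$ is the position with heaps of $x_1,\ldots,x_k$ tokens; the classical move $(i,-j)$ with $j\ge1$ removes $j$ tokens from heap $i$ and is illegal if heap $i$ has fewer than $j$ tokens; normal play. Quantum variation: a position is a nonempty finite set $\langle G_1,\ldots,G_n\rangle$ of classical positions. A classical move $m$ is legal if legal in some $G_i$. A Q-move is a nonempty set $\{m_1,\ldots,m_k\}$ of legal classical moves, leading to the set of all $\Gamma(G_i,m_j)$ that are legal results. Ruleset A: only Q-moves with at least two classical moves allowed. Ruleset B: same, except when the player has exactly one legal classical move overall he may play it alone. Ruleset D: all Q-moves allowed. The player with no allowed Q-move loses. $G\equiv H$ means $G+X$ and $H+X$ have the same outcome for every game $X$ (disjunctive sum); the value of a game is its equivalence class. *)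

From mathcomp Require Import all_boot.
Set Implicit Arguments. Unset Strict Implicit. Unset Printing Implicit Defensive.

Inductive igame : Type := IG of seq igame.

Fixpoint gsum (g h : igame) {struct g} : igame :=
  match g with
  | IG gs =>
      (fix aux (h : igame) : igame :=
         match h with
         | IG hs => IG (map (fun g' => gsum g' h) gs ++ map aux hs)
         end) h
  end.

Fixpoint fpwin (g : igame) : bool :=
  match g with IG gs => has (fun g' => ~~ fpwin g') gs end.

Definition gequiv (G H : igame) : Prop :=
  forall X : igame, fpwin (gsum G X) = fpwin (gsum H X).

(* A quantum position <Nim(i_1),...,Nim(i_l)> is represented by the
   (nonempty) list of heap sizes [:: i_1; ...; i_l]; order and
   duplicates are irrelevant (it stands for a set). *)
Definition qmax (P : seq nat) : nat := \max_(i <- P) i.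

(* The classical move "remove j tokens" (j >= 1) is legal in the quantum
   position P iff it is legal in some Nim(i), i in P, i.e. 1 <= j <= qmax P.
   A Q-move is a nonempty set S of legal classical moves; it is represented
   by a subsequence of iota 1 (qmax P) (hence duplicate-free). *)
Fixpoint subseqs (s : seq nat) : seq (seq nat) :=
  match s with
  | [::] => [:: [::]]
  | x :: s' => let r := subseqs s' in map (cons x) r ++ r
  end.

Definition qresult (P S : seq nat) : seq nat :=
  flatten [seq [seq i - j | j <- S & j <= i] | i <- P].

Inductive ruleset := RulesetA | RulesetB | RulesetD.

Definition allowed (r : ruleset) (P S : seq nat) : bool :=
  match r with
  | RulesetA => 1 < size S
  | RulesetB => (1 < size S) || ((size S == 1) && (qmax P == 1))
      (* qmax P == 1 <-> exactly one legal classical move (remove 1) *)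
  | RulesetD => 0 < size S
  end.

(* Game tree of a quantum position, with fuel (any fuel > qmax P is
   enough since every Q-move strictly decreases qmax). *)
Fixpoint qgame_fuel (r : ruleset) (n : nat) (P : seq nat) : igame :=
  match n with
  | 0 => IG [::]
  | n'.+1 =>
      IG [seq qgame_fuel r n' (qresult P M)
         | M <- subseqs (iota 1 (qmax P)) & allowed r P M]
  end.

Definition qgame (r : ruleset) (P : seq nat) : igame :=
  qgame_fuel r (qmax P).+1 P.

From mathcomp Require Import all_boot.

(** The legal Q-moves and their admissibility only see [qmax P],
    and after a Q-move [M] the largest heap is [\max_(j <- M | j <= m) (m - j)]
    for [m = qmax P], because [m |-> \max_(j <- M | j <= m) (m - j)] is
    nondecreasing and hence commutes with maxima. So positions with the same
    largest heap have identical game trees, and a fortiori are equivalent. *)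

Lemma homo_maxn (f : nat -> nat) :
  {homo f : m n / m <= n} -> {morph f : m n / maxn m n}.
Proof.
move=> f_homo m n; case: (leqP m n) => [le_mn | /ltnW le_nm].
  by rewrite !(maxn_idPr _) // f_homo.
by rewrite !(maxn_idPl _) // f_homo.
Qed.

Lemma bigmax_homo (f : nat -> nat) (s : seq nat) :
  {homo f : m n / m <= n} -> f 0 = 0 ->
  \max_(i <- s) f i = f (\max_(i <- s) i).
Proof. by move=> f_homo f0; rewrite (big_morph f (@homo_maxn f f_homo) f0). Qed.

Definition qmove_max (M : seq nat) (m : nat) : nat :=
  \max_(j <- M | j <= m) (m - j).

Lemma qmove_max_homo (M : seq nat) : {homo qmove_max M : m n / m <= n}.
Proof.
move=> m n le_mn; apply/bigmax_leqP_seq => j jM le_jm.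
apply: bigmaxn_sup_seq jM (leq_trans le_jm le_mn) _.
exact: leq_sub2r.
Qed.

Lemma qmove_max0 (M : seq nat) : qmove_max M 0 = 0.
Proof. by apply/eqP; rewrite -leqn0; apply/bigmax_leqP_seq. Qed.

Lemma qmax_qresult (P M : seq nat) :
  qmax (qresult P M) = qmove_max M (qmax P).
Proof.
rewrite /qmax /qresult big_flatten big_map /=.
under eq_bigr => i _ do rewrite big_map big_filter.
exact: bigmax_homo (@qmove_max_homo M) (qmove_max0 M).
Qed.

Lemma allowed_qmax (r : ruleset) (P Q : seq nat) :
  qmax P = qmax Q -> allowed r P =1 allowed r Q.
Proof. by move=> ePQ M; case: r => //=; rewrite ePQ. Qed.

Lemma qgame_fuel_qmax (r : ruleset) (n : nat) (P Q : seq nat) :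
  qmax P = qmax Q -> qgame_fuel r n P = qgame_fuel r n Q.
Proof.
elim: n P Q => [//|n IHn] P Q ePQ /=.
rewrite ePQ (eq_filter (allowed_qmax r _ _ ePQ)); congr IG.
by apply: eq_map => M; apply: IHn; rewrite !qmax_qresult ePQ.
Qed.

Theorem corollary1 (r : ruleset) (P Q : seq nat) :
  P != [::] -> Q != [::] ->
  \max_(i <- P) i = \max_(i <- Q) i ->
  gequiv (qgame r P) (qgame r Q).
Proof.
move=> _ _ ePQ X; have eqmax : qmax P = qmax Q := ePQ.
by rewrite /qgame eqmax (qgame_fuel_qmax r _ _ _ eqmax).
Qed.
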